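(* Let $f:E\to B$ be any morphism in $\mathbf{Gpd}^{\mathbf{G}}$. Then $f$ factors as $f=f_\infty\circ i_\infty$ where $i_\infty:E\to E_\infty$ is a projective trivial cofibration and $f_\infty:E_\infty\to B$ is a projective fibration whose underlying isofibration of groupoids is equipped with a split cleavage.
   Context: $\mathbf{Gpd}^{\mathbf{G}}$ is the category of groupoids equipped with an involution and functors commuting with the involutions, with its projective model structure: weak equivalences (resp. fibrations) are the morphisms whose underlying functor is an equivalence (resp. an isofibration) of groupoids, and cofibrations are the morphisms with the left lifting property against trivial fibrations. A split cleavage for an isofibration $f:A\to C$ assigns to each isomorphism $\sigma:x\to y$ in $C$ and each $z$ with $f(z)=x$ a morphism $c(\sigma,z)$ with domain $z$ and $f(c(\sigma,z))=\sigma$, such that $c(1_x,z)=1_z$ and $c(\tau\circ\sigma,z)=c(\tau,\mathrm{cod}\,c(\sigma,z))\circ c(\sigma,z)$. *)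

Set Implicit Arguments.
Unset Strict Implicit.

(** * Groupoids, presented with a single type of arrows.
    [comp g f] is  g ∘ f  (defined when [src g = tgt f]; its value on
    non-composable pairs is irrelevant). Every arrow is invertible. *)
Record Gpd := {
  Ob : Type;
  Mor : Type;
  src : Mor -> Ob;
  tgt : Mor -> Ob;
  idm : Ob -> Mor;
  comp : Mor -> Mor -> Mor;
  inv : Mor -> Mor;
  src_idm : forall x, src (idm x) = x;
  tgt_idm : forall x, tgt (idm x) = x;
  src_comp : forall g f, src g = tgt f -> src (comp g f) = src f;
  tgt_comp : forall g f, src g = tgt f -> tgt (comp g f) = tgt g;
  comp_idr : forall f, comp f (idm (src f)) = f;
  comp_idl : forall f, comp (idm (tgt f)) f = f;
  comp_assoc : forall h g f, src h = tgt g -> src g = tgt f ->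
      comp h (comp g f) = comp (comp h g) f;
  src_inv : forall f, src (inv f) = tgt f;
  tgt_inv : forall f, tgt (inv f) = src f;
  comp_invl : forall f, comp (inv f) f = idm (src f);
  comp_invr : forall f, comp f (inv f) = idm (tgt f)
}.

Arguments src {_} _.
Arguments tgt {_} _.
Arguments idm {_} _.
Arguments comp {_} _ _.
Arguments inv {_} _.

Record Functor (A C : Gpd) := {
  fob : Ob A -> Ob C;
  fmor : Mor A -> Mor C;
  fsrc : forall g, src (fmor g) = fob (src g);
  ftgt : forall g, tgt (fmor g) = fob (tgt g);
  fidm : forall x, fmor (idm x) = idm (fob x);
  fcomp : forall g f, src g = tgt f -> fmor (comp g f) = comp (fmor g) (fmor f)
}.

Arguments fob {A C} _ _.
Arguments fmor {A C} _ _.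

(** * Objects of Gpd^G: groupoids with a (strict) involution, i.e. an
    endofunctor [s] with [s ∘ s = id]. *)
Record GpdG := {
  ggpd :> Gpd;
  gs : Functor ggpd ggpd;
  gs_invol_ob : forall x, fob gs (fob gs x) = x;
  gs_invol_mor : forall g, fmor gs (fmor gs g) = g
}.

Record GMor (E B : GpdG) := {
  gfun :> Functor E B;
  gcomm_ob : forall x, fob gfun (fob (gs E) x) = fob (gs B) (fob gfun x);
  gcomm_mor : forall g, fmor gfun (fmor (gs E) g) = fmor (gs B) (fmor gfun g)
}.

Definition gm_eq (E B : GpdG) (f g : GMor E B) : Prop :=
  (forall x, fob f x = fob g x) /\ (forall m, fmor f m = fmor g m).

Definition fun_comp (A B C : Gpd) (g : Functor B C) (f : Functor A B) : Functor A C.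
Proof.
  refine {| fob := fun x => fob g (fob f x); fmor := fun m => fmor g (fmor f m) |}.
  - intro m; rewrite (fsrc g), (fsrc f); reflexivity.
  - intro m; rewrite (ftgt g), (ftgt f); reflexivity.
  - intro x; rewrite (fidm f), (fidm g); reflexivity.
  - intros m n H. rewrite (fcomp f H), (fcomp g); [reflexivity|].
    rewrite (fsrc f), (ftgt f), H; reflexivity.
Defined.

Definition gm_comp (A B C : GpdG) (g : GMor B C) (f : GMor A B) : GMor A C.
Proof.
  refine {| gfun := fun_comp g f |}; simpl.
  - intro x; rewrite (gcomm_ob f), (gcomm_ob g); reflexivity.
  - intro m; rewrite (gcomm_mor f), (gcomm_mor g); reflexivity.
Defined.

Definition fully_faithful (A C : Gpd) (F : Functor A C) : Prop :=
  forall (x y : Ob A) (g : Mor C), src g = fob F x -> tgt g = fob F y ->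
    exists h : Mor A, (src h = x /\ tgt h = y /\ fmor F h = g) /\
      forall h' : Mor A, src h' = x -> tgt h' = y -> fmor F h' = g -> h' = h.

Definition ess_surj (A C : Gpd) (F : Functor A C) : Prop :=
  forall b : Ob C, exists (a : Ob A) (g : Mor C), src g = fob F a /\ tgt g = b.

Definition is_equivalence (A C : Gpd) (F : Functor A C) : Prop :=
  fully_faithful F /\ ess_surj F.

Definition is_isofibration (A C : Gpd) (F : Functor A C) : Prop :=
  forall (s : Mor C) (z : Ob A), fob F z = src s ->
    exists m : Mor A, src m = z /\ fmor F m = s.

(** Split cleavage for F : A -> C (a choice c(s,z) of lifts, given as a
    total function whose values matter only when [fob F z = src s]). *)
Definition is_split_cleavage (A C : Gpd) (F : Functor A C)
    (c : Mor C -> Ob A -> Mor A) : Prop :=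
  (forall s z, fob F z = src s -> src (c s z) = z /\ fmor F (c s z) = s) /\
  (forall x z, fob F z = x -> c (idm x) z = idm z) /\
  (forall t s z, src t = tgt s -> fob F z = src s ->
      c (comp t s) z = comp (c t (tgt (c s z))) (c s z)).

Definition has_split_cleavage (A C : Gpd) (F : Functor A C) : Prop :=
  exists c, is_split_cleavage F c.

Definition proj_weq (E B : GpdG) (f : GMor E B) : Prop := is_equivalence f.
Definition proj_fib (E B : GpdG) (f : GMor E B) : Prop := is_isofibration f.
Definition proj_triv_fib (E B : GpdG) (f : GMor E B) : Prop :=
  proj_fib f /\ proj_weq f.

Definition llp (A B X Y : GpdG) (i : GMor A B) (p : GMor X Y) : Prop :=
  forall (u : GMor A X) (v : GMor B Y),
    gm_eq (gm_comp p u) (gm_comp v i) ->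
    exists h : GMor B X, gm_eq (gm_comp h i) u /\ gm_eq (gm_comp p h) v.

Definition proj_cof (A B : GpdG) (i : GMor A B) : Prop :=
  forall (X Y : GpdG) (p : GMor X Y), proj_triv_fib p -> llp i p.

Definition proj_triv_cof (A B : GpdG) (i : GMor A B) : Prop :=
  proj_cof i /\ proj_weq i.

From Stdlib Require Import ProofIrrelevance ClassicalEpsilon PeanoNat.
Set Implicit Arguments.
Unset Strict Implicit.

(* E_inf is a path-object replacement of E. An object is a triple (e, s, j) of
   an object e of E, an arrow s : f e -> b of B and a level j, and an arrow is an
   arrow of E between the first components; so forgetting s and j is an
   equivalence onto E, with section i_inf e = (e, 1, 0). The functor f_inf sends
   (e, s, j) to the target of s and conjugates f by the s's, and post-composing s
   with an arrow of B is a split cleavage.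
   The levels make the involution free away from the image of E: they are paired
   2k <-> 2k+1, shifted by one when s is an identity so that level 0 is fixed
   there. Given a square from i_inf to a fibration p, lift the arrow
   i_inf e -> (e, s, j) along p at one point of each free orbit, transport the
   lift by the involution to the other point, and conjugate the top map by these
   lifts: this is an equivariant diagonal filler. *)

Ltac simpl_ends :=
  repeat first [ rewrite src_comp by simpl_ends | rewrite tgt_comp by simpl_ends
               | rewrite src_inv | rewrite tgt_inv | rewrite src_idm | rewrite tgt_idm ];
  try congruence.

Section GroupoidFacts.
Variable G : Gpd.

Lemma inv_unique (g f : Mor G) :
  src g = tgt f -> comp g f = idm (src f) -> g = inv f.
Proof.
  intros Hgf Hid.
  rewrite <- (comp_idr g), Hgf, <- comp_invr, comp_assoc by simpl_ends.
  rewrite Hid, <- (tgt_inv f), comp_idl. reflexivity.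
Qed.

Lemma inv_idm (x : Ob G) : inv (idm x) = idm x.
Proof.
  symmetry; apply inv_unique; simpl_ends.
  rewrite <- (tgt_idm x) at 1. apply comp_idl.
Qed.

Lemma comp_conj (a b c g h : Mor G) :
  src g = tgt h -> src a = tgt g -> src b = tgt h -> src c = src h ->
  comp (comp a (comp g (inv b))) (comp b (comp h (inv c)))
  = comp a (comp (comp g h) (inv c)).
Proof.
  intros Hgh Ha Hb Hc.
  rewrite <- comp_assoc, <- (comp_assoc (h := g)), (comp_assoc (h := inv b)) by simpl_ends.
  rewrite comp_invl, Hb, <- (tgt_comp (g := h) (f := inv c)), comp_idl by simpl_ends.
  rewrite (comp_assoc (h := g)) by simpl_ends. reflexivity.
Qed.

Definition is_idm (m : Mor G) : bool :=
  if excluded_middle_informative (m = idm (src m)) then true else false.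

Lemma is_idm_idm (x : Ob G) : is_idm (idm x) = true.
Proof.
  unfold is_idm; destruct excluded_middle_informative as [|Hn]; [reflexivity|].
  exfalso; apply Hn; rewrite src_idm; reflexivity.
Qed.

Lemma is_idmP (m : Mor G) : is_idm m = true -> m = idm (src m).
Proof. unfold is_idm; destruct excluded_middle_informative; [auto|discriminate]. Qed.

End GroupoidFacts.

Lemma fmor_inv (A C : Gpd) (F : Functor A C) (g : Mor A) :
  fmor F (inv g) = inv (fmor F g).
Proof.
  apply inv_unique.
  - rewrite fsrc, ftgt, src_inv; reflexivity.
  - rewrite <- fcomp by (rewrite src_inv; reflexivity).
    rewrite comp_invl, fidm, fsrc; reflexivity.
Qed.

Lemma is_idm_gs (B : GpdG) (m : Mor B) : is_idm (fmor (gs B) m) = is_idm m.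
Proof.
  destruct (is_idm m) eqn:Hm.
  - rewrite (is_idmP Hm), fidm. apply is_idm_idm.
  - destruct (is_idm (fmor (gs B) m)) eqn:Hs; [|reflexivity].
    rewrite <- Hm, <- (gs_invol_mor m), (is_idmP Hs), fidm. symmetry; apply is_idm_idm.
Qed.

Section Conjugate.
Variables (A X : Gpd) (F : Functor A X) (rho : Ob A -> Mor X).
Hypothesis rho_src : forall a, src (rho a) = fob F a.

Definition conj_mor (g : Mor A) : Mor X :=
  comp (rho (tgt g)) (comp (fmor F g) (inv (rho (src g)))).

Ltac conj_ends := repeat first [ rewrite src_comp by conj_ends | rewrite tgt_comp by conj_ends
  | rewrite src_inv | rewrite tgt_inv | rewrite fsrc | rewrite ftgt | rewrite rho_src ];
  try congruence.

Definition conj_functor : Functor A X.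
Proof.
  refine {| fob := fun a => tgt (rho a); fmor := conj_mor |}.
  - intro g; unfold conj_mor; conj_ends.
  - intro g; unfold conj_mor; conj_ends.
  - intro x; unfold conj_mor.
    rewrite src_idm, tgt_idm, fidm, <- rho_src, <- tgt_inv, comp_idl, comp_invr.
    reflexivity.
  - intros g h Hgh; unfold conj_mor.
    rewrite src_comp, tgt_comp, fcomp by exact Hgh.
    rewrite Hgh; symmetry; apply comp_conj; conj_ends.
Defined.

Lemma conj_fmor_id (g : Mor A) :
  rho (src g) = idm (fob F (src g)) -> rho (tgt g) = idm (fob F (tgt g)) ->
  fmor conj_functor g = fmor F g.
Proof.
  intros Hs Ht; simpl; unfold conj_mor.
  rewrite Hs, Ht, inv_idm, <- fsrc, <- ftgt, comp_idr, comp_idl. reflexivity.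
Qed.

Lemma fmor_conj (Y : Gpd) (H : Functor X Y) (g : Mor A) :
  fmor H (fmor conj_functor g)
  = comp (fmor H (rho (tgt g))) (comp (fmor H (fmor F g)) (inv (fmor H (rho (src g))))).
Proof.
  simpl; unfold conj_mor.
  rewrite fcomp, fcomp, fmor_inv by conj_ends. reflexivity.
Qed.

End Conjugate.

Definition conj_gmor (A X : GpdG) (F : GMor A X) (rho : Ob A -> Mor X)
  (rho_src : forall a, src (rho a) = fob F a)
  (rho_gs : forall a, rho (fob (gs A) a) = fmor (gs X) (rho a)) : GMor A X.
Proof.
  refine {| gfun := conj_functor rho_src |}; simpl.
  - intro a; rewrite rho_gs, ftgt; reflexivity.
  - intro g; unfold conj_mor.
    rewrite fsrc, ftgt, !rho_gs, gcomm_mor, fcomp, fcomp, fmor_inv.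
    + reflexivity.
    + rewrite fsrc, tgt_inv, rho_src; reflexivity.
    + rewrite tgt_comp, ftgt, rho_src; [reflexivity|].
      rewrite fsrc, tgt_inv, rho_src; reflexivity.
Defined.
Definition pair_swap (j : nat) : nat := if Nat.even j then S j else pred j.

Lemma even_pair_swap (j : nat) : Nat.even (pair_swap j) = negb (Nat.even j).
Proof.
  unfold pair_swap; destruct (Nat.even j) eqn:Hj.
  - rewrite Nat.even_succ, <- Nat.negb_even, Hj; reflexivity.
  - destruct j as [|k]; [discriminate|].
    rewrite Nat.even_succ, <- Nat.negb_even in Hj; simpl.
    destruct (Nat.even k); [reflexivity|discriminate].
Qed.

Lemma pair_swap_invol (j : nat) : pair_swap (pair_swap j) = j.
Proof.
  unfold pair_swap at 1; rewrite even_pair_swap; unfold pair_swap.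
  destruct (Nat.even j) eqn:Hj; [reflexivity|].
  destruct j as [|k]; [discriminate|reflexivity].
Qed.

Definition index_invol (keep0 : bool) (j : nat) : nat :=
  match keep0, j with
  | true, 0 => 0
  | true, S k => S (pair_swap k)
  | false, _ => pair_swap j
  end.

Definition index_fixed (keep0 : bool) (j : nat) : bool := keep0 && Nat.eqb j 0.

Definition index_positive (keep0 : bool) (j : nat) : bool :=
  match keep0, j with
  | true, S k => Nat.even k
  | _, _ => Nat.even j
  end.

Lemma index_invol_invol (b : bool) (j : nat) : index_invol b (index_invol b j) = j.
Proof. destruct b, j; simpl; rewrite ?pair_swap_invol; reflexivity. Qed.

Lemma index_fixed_invol (b : bool) (j : nat) :
  index_fixed b (index_invol b j) = index_fixed b j.
Proof. destruct b, j; reflexivity. Qed.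

Lemma index_positive_invol (b : bool) (j : nat) : index_fixed b j = false ->
  index_positive b (index_invol b j) = negb (index_positive b j).
Proof. destruct b, j; simpl; try discriminate; intros _; try apply even_pair_swap; reflexivity. Qed.

Section Replacement.
Variables (E B : GpdG) (f : GMor E B).

Record inf_ob := InfOb {
  base : Ob E;
  path : Mor B;
  level : nat;
  path_src : src path = fob f base
}.

Record inf_mor := InfMor {
  dom : inf_ob;
  cod : inf_ob;
  arr : Mor E;
  arr_src : src arr = base dom;
  arr_tgt : tgt arr = base cod
}.

Arguments InfOb : clear implicits.
Arguments InfMor : clear implicits.

Lemma inf_ob_ext (x y : inf_ob) :
  base x = base y -> path x = path y -> level x = level y -> x = y.
Proof.
  destruct x, y; simpl; intros <- <- <-. f_equal; apply proof_irrelevance.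
Qed.

Lemma inf_mor_ext (g h : inf_mor) :
  dom g = dom h -> cod g = cod h -> arr g = arr h -> g = h.
Proof.
  destruct g, h; simpl; intros <- <- <-. f_equal; apply proof_irrelevance.
Qed.

Definition inf_idm (x : inf_ob) : inf_mor :=
  InfMor x x (idm (base x)) (src_idm _) (tgt_idm _).

Definition inf_inv (g : inf_mor) : inf_mor :=
  InfMor (cod g) (dom g) (inv (arr g))
    (eq_trans (src_inv _) (arr_tgt g)) (eq_trans (tgt_inv _) (arr_src g)).

Definition inf_comp (g h : inf_mor) : inf_mor :=
  match excluded_middle_informative (src (arr g) = tgt (arr h)) with
  | left H => InfMor (dom h) (cod g) (comp (arr g) (arr h))
                (eq_trans (src_comp H) (arr_src h)) (eq_trans (tgt_comp H) (arr_tgt g))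
  | right _ => h
  end.

Section Composable.
Variables g h : inf_mor.
Hypothesis Hgh : dom g = cod h.

Lemma arr_composable : src (arr g) = tgt (arr h).
Proof. rewrite arr_src, arr_tgt, Hgh; reflexivity. Qed.

Ltac unfold_inf_comp :=
  unfold inf_comp; destruct excluded_middle_informative as [|Hn];
  [reflexivity | contradiction (Hn arr_composable)].

Lemma dom_comp : dom (inf_comp g h) = dom h. Proof. unfold_inf_comp. Qed.
Lemma cod_comp : cod (inf_comp g h) = cod g. Proof. unfold_inf_comp. Qed.
Lemma arr_comp : arr (inf_comp g h) = comp (arr g) (arr h). Proof. unfold_inf_comp. Qed.

End Composable.

Definition inf_gpd : Gpd.
Proof.
  refine (@Build_Gpd inf_ob inf_mor dom cod inf_idm inf_comp inf_inv
            (fun _ => eq_refl) (fun _ => eq_refl) dom_comp cod_comp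
            _ _ _ (fun _ => eq_refl) (fun _ => eq_refl) _ _).
  - intro g; apply inf_mor_ext; rewrite ?dom_comp, ?cod_comp, ?arr_comp by reflexivity;
      try reflexivity.
    simpl; rewrite <- arr_src; apply comp_idr.
  - intro g; apply inf_mor_ext; rewrite ?dom_comp, ?cod_comp, ?arr_comp by reflexivity;
      try reflexivity.
    simpl; rewrite <- arr_tgt; apply comp_idl.
  - intros k g h Hkg Hgh.
    assert (Hk : dom k = cod (inf_comp g h)) by (rewrite cod_comp; assumption).
    assert (Hh : dom (inf_comp k g) = cod h) by (rewrite dom_comp; assumption).
    apply inf_mor_ext; rewrite ?dom_comp, ?cod_comp, ?arr_comp by assumption; try reflexivity.
    apply comp_assoc; apply arr_composable; assumption.
  - intro g; apply inf_mor_ext; rewrite ?dom_comp, ?cod_comp, ?arr_comp by reflexivity;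
      try reflexivity.
    simpl; rewrite comp_invl, arr_src; reflexivity.
  - intro g; apply inf_mor_ext; rewrite ?dom_comp, ?cod_comp, ?arr_comp by reflexivity;
      try reflexivity.
    simpl; rewrite comp_invr, arr_tgt; reflexivity.
Defined.

Lemma path_src_gs (x : inf_ob) :
  src (fmor (gs B) (path x)) = fob f (fob (gs E) (base x)).
Proof. rewrite fsrc, path_src, gcomm_ob; reflexivity. Qed.

Definition inf_sob (x : inf_ob) : inf_ob :=
  InfOb (fob (gs E) (base x)) (fmor (gs B) (path x))
    (index_invol (is_idm (path x)) (level x)) (path_src_gs x).

Definition inf_smor (g : inf_mor) : inf_mor :=
  InfMor (inf_sob (dom g)) (inf_sob (cod g)) (fmor (gs E) (arr g))
    (eq_trans (fsrc _ _) (f_equal _ (arr_src g))) (eq_trans (ftgt _ _) (f_equal _ (arr_tgt g))).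

Lemma inf_sob_invol (x : inf_ob) : inf_sob (inf_sob x) = x.
Proof.
  apply inf_ob_ext; simpl.
  - apply gs_invol_ob.
  - apply gs_invol_mor.
  - rewrite is_idm_gs; apply index_invol_invol.
Qed.

Definition inf_s : Functor inf_gpd inf_gpd.
Proof.
  refine (@Build_Functor inf_gpd inf_gpd inf_sob inf_smor
            (fun _ => eq_refl) (fun _ => eq_refl) _ _).
  - intro x; apply inf_mor_ext; simpl; rewrite ?fidm; reflexivity.
  - intros g h Hgh; simpl in Hgh.
    apply inf_mor_ext; simpl;
      rewrite ?dom_comp, ?cod_comp, ?arr_comp by (simpl; congruence); try reflexivity.
    apply fcomp, arr_composable, Hgh.
Defined.

Definition Einf : GpdG.
Proof.
  refine (@Build_GpdG inf_gpd inf_s inf_sob_invol _).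
  intro g; apply inf_mor_ext; simpl; rewrite ?inf_sob_invol, ?gs_invol_mor; reflexivity.
Defined.

Definition proj : GMor Einf E.
Proof.
  refine (@Build_GMor Einf E
            (@Build_Functor inf_gpd E base arr arr_src arr_tgt (fun _ => eq_refl) arr_comp) _ _);
    reflexivity.
Defined.

Definition incl_ob (e : Ob E) : inf_ob := InfOb e (idm (fob f e)) 0 (src_idm _).
Definition incl_mor (m : Mor E) : inf_mor :=
  InfMor (incl_ob (src m)) (incl_ob (tgt m)) m eq_refl eq_refl.

Lemma incl_ob_gs (e : Ob E) : incl_ob (fob (gs E) e) = inf_sob (incl_ob e).
Proof.
  apply inf_ob_ext; simpl; rewrite ?fidm, ?gcomm_ob, ?is_idm_idm; reflexivity.
Qed.

Lemma incl_mor_idm (e : Ob E) : incl_mor (idm e) = inf_idm (incl_ob e).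
Proof. apply inf_mor_ext; simpl; rewrite ?src_idm, ?tgt_idm; reflexivity. Qed.

Lemma incl_mor_comp (m n : Mor E) : src m = tgt n ->
  incl_mor (comp m n) = inf_comp (incl_mor m) (incl_mor n).
Proof.
  intro Hmn.
  assert (H : dom (incl_mor m) = cod (incl_mor n)) by (simpl; rewrite Hmn; reflexivity).
  apply inf_mor_ext; rewrite ?dom_comp, ?cod_comp, ?arr_comp by exact H; simpl;
    rewrite ?src_comp, ?tgt_comp by exact Hmn; reflexivity.
Qed.

Lemma incl_mor_gs (m : Mor E) : incl_mor (fmor (gs E) m) = inf_smor (incl_mor m).
Proof. apply inf_mor_ext; simpl; rewrite ?fsrc, ?ftgt, ?incl_ob_gs; reflexivity. Qed.

Definition incl : GMor E Einf :=
  @Build_GMor E Einf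
    (@Build_Functor E inf_gpd incl_ob incl_mor (fun _ => eq_refl) (fun _ => eq_refl)
       incl_mor_idm incl_mor_comp)
    incl_ob_gs incl_mor_gs.

Definition finf : GMor Einf B :=
  conj_gmor (F := gm_comp f proj) (rho := path) path_src (fun _ => eq_refl).

Lemma finf_incl : gm_eq f (gm_comp finf incl).
Proof.
  split.
  - intro e; simpl; rewrite tgt_idm; reflexivity.
  - intro m; symmetry; apply (conj_fmor_id (F := gm_comp f proj)); reflexivity.
Qed.

Lemma path_src_comp (t : Mor B) (z : inf_ob) (H : src t = tgt (path z)) :
  src (comp t (path z)) = fob f (base z).
Proof. rewrite src_comp by exact H; apply path_src. Qed.

Definition transport (t : Mor B) (z : inf_ob) : inf_ob :=
  match excluded_middle_informative (src t = tgt (path z)) with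
  | left H => InfOb (base z) (comp t (path z)) (level z) (path_src_comp H)
  | right _ => z
  end.

Lemma base_transport (t : Mor B) (z : inf_ob) : base (transport t z) = base z.
Proof. unfold transport; destruct excluded_middle_informative; reflexivity. Qed.

Lemma level_transport (t : Mor B) (z : inf_ob) : level (transport t z) = level z.
Proof. unfold transport; destruct excluded_middle_informative; reflexivity. Qed.

Lemma path_transport (t : Mor B) (z : inf_ob) :
  src t = tgt (path z) -> path (transport t z) = comp t (path z).
Proof.
  intro H; unfold transport; destruct excluded_middle_informative; [reflexivity|contradiction].
Qed.

Definition cleavage (t : Mor B) (z : inf_ob) : inf_mor :=
  InfMor z (transport t z) (idm (base z))
    (src_idm _) (eq_trans (tgt_idm _) (eq_sym (base_transport t z))).

Lemma transport_idm (x : Ob B) (z : inf_ob) : tgt (path z) = x -> transport (idm x) z = z.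
Proof.
  intros <-; apply inf_ob_ext.
  - apply base_transport.
  - rewrite path_transport by apply src_idm; apply comp_idl.
  - apply level_transport.
Qed.

Lemma transport_comp (t s : Mor B) (z : inf_ob) : src t = tgt s -> src s = tgt (path z) ->
  transport (comp t s) z = transport t (transport s z).
Proof.
  intros Hts Hs.
  assert (Ht : src t = tgt (path (transport s z)))
    by (rewrite path_transport, tgt_comp by exact Hs; exact Hts).
  apply inf_ob_ext.
  - rewrite !base_transport; reflexivity.
  - rewrite !path_transport by (rewrite ?src_comp; assumption).
    symmetry; apply comp_assoc; assumption.
  - rewrite !level_transport; reflexivity.
Qed.

Lemma finf_split : is_split_cleavage finf cleavage.
Proof.
  split; [|split].
  - intros t z Hz; simpl in Hz; split; [reflexivity|].
    assert (H : src t = tgt (path z)) by (symmetry; exact Hz).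
    simpl; unfold conj_mor; simpl; rewrite (path_transport H).
    rewrite fidm, <- path_src, <- tgt_inv, comp_idl, <- comp_assoc by simpl_ends.
    rewrite comp_invr, Hz, comp_idr; reflexivity.
  - intros x z Hz; apply inf_mor_ext; simpl; rewrite ?transport_idm by exact Hz; reflexivity.
  - intros t s z Hts Hz.
    assert (H : dom (cleavage t (cod (cleavage s z))) = cod (cleavage s z)) by reflexivity.
    apply inf_mor_ext; rewrite ?dom_comp, ?cod_comp, ?arr_comp by exact H; simpl;
      rewrite ?transport_comp by (simpl in Hz; congruence); try reflexivity.
    rewrite base_transport; symmetry; rewrite <- (tgt_idm (base z)) at 1; apply comp_idl.
Qed.

Lemma finf_fib : proj_fib finf.
Proof. intros t z Hz; exists (cleavage t z); apply (proj1 finf_split), Hz. Qed.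

Definition from_base (x : inf_ob) : inf_mor :=
  InfMor (incl_ob (base x)) x (idm (base x)) (src_idm _) (tgt_idm _).

Lemma incl_weq : proj_weq incl.
Proof.
  split.
  - intros x y g Hx Hy; simpl in Hx, Hy; exists (arr g); split; [split; [|split]|].
    + rewrite arr_src, Hx; reflexivity.
    + rewrite arr_tgt, Hy; reflexivity.
    + apply inf_mor_ext; simpl; rewrite ?arr_src, ?arr_tgt, ?Hx, ?Hy; reflexivity.
    + intros h _ _ <-; reflexivity.
  - intro x; exists (base x), (from_base x); split; reflexivity.
Qed.

Lemma inf_mor_decomp (g : inf_mor) :
  g = @comp inf_gpd (from_base (cod g))
        (@comp inf_gpd (incl_mor (arr g)) (@inv inf_gpd (from_base (dom g)))).
Proof.
  assert (H1 : dom (incl_mor (arr g)) = cod (inf_inv (from_base (dom g))))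
    by (simpl; rewrite arr_src; reflexivity).
  assert (H2 : dom (from_base (cod g))
               = cod (inf_comp (incl_mor (arr g)) (inf_inv (from_base (dom g)))))
    by (rewrite cod_comp by exact H1; simpl; rewrite arr_tgt; reflexivity).
  apply inf_mor_ext; simpl.
  - rewrite dom_comp, dom_comp by assumption; reflexivity.
  - rewrite cod_comp by assumption; reflexivity.
  - rewrite arr_comp, arr_comp by assumption; simpl.
    rewrite inv_idm, <- arr_src, <- arr_tgt, comp_idr, comp_idl; reflexivity.
Qed.

Lemma fmor_inf_decomp (Z : Gpd) (G : Functor inf_gpd Z) (g : inf_mor) :
  fmor G g = comp (fmor G (from_base (cod g)))
               (comp (fmor G (incl_mor (arr g))) (inv (fmor G (from_base (dom g))))).
Proof.
  rewrite (inf_mor_decomp g) at 1.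
  rewrite fcomp, fcomp, fmor_inv; [reflexivity| |];
    simpl; rewrite ?cod_comp by (simpl; rewrite arr_src; reflexivity);
    simpl; rewrite ?arr_src, ?arr_tgt; reflexivity.
Qed.

Definition fixed (x : inf_ob) : bool := index_fixed (is_idm (path x)) (level x).
Definition positive (x : inf_ob) : bool := index_positive (is_idm (path x)) (level x).

Lemma fixed_inf_sob (x : inf_ob) : fixed (inf_sob x) = fixed x.
Proof. unfold fixed; simpl; rewrite is_idm_gs; apply index_fixed_invol. Qed.

Lemma positive_inf_sob (x : inf_ob) : fixed x = false -> positive (inf_sob x) = negb (positive x).
Proof. unfold fixed, positive; simpl; rewrite is_idm_gs; apply index_positive_invol. Qed.

Lemma fixed_incl_ob (x : inf_ob) : fixed x = true -> x = incl_ob (base x).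
Proof.
  unfold fixed, index_fixed; intro Hx; apply andb_prop in Hx as [Hid H0].
  apply inf_ob_ext; simpl.
  - reflexivity.
  - rewrite (is_idmP Hid), path_src; reflexivity.
  - apply Nat.eqb_eq, H0.
Qed.

Section Lifting.
Variables (X Y : GpdG) (p : GMor X Y) (u : GMor E X) (v : GMor Einf Y).
Hypothesis p_fib : is_isofibration p.
Hypothesis square : gm_eq (gm_comp p u) (gm_comp v incl).

Lemma from_base_liftable (x : inf_ob) :
  exists m, src m = fob u (base x) /\ fmor p m = fmor v (from_base x).
Proof. apply p_fib; rewrite fsrc; apply (proj1 square). Qed.

Definition from_base_lift (x : inf_ob) : Mor X :=
  proj1_sig (constructive_indefinite_description _ (from_base_liftable x)).

Lemma from_base_lift_spec (x : inf_ob) :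
  src (from_base_lift x) = fob u (base x) /\ fmor p (from_base_lift x) = fmor v (from_base x).
Proof. exact (proj2_sig (constructive_indefinite_description _ (from_base_liftable x))). Qed.

Definition diag_arrow (x : inf_ob) : Mor X :=
  if fixed x then idm (fob u (base x))
  else if positive x then from_base_lift x
  else fmor (gs X) (from_base_lift (inf_sob x)).

Lemma diag_arrow_src (x : inf_ob) : src (diag_arrow x) = fob u (base x).
Proof.
  unfold diag_arrow; destruct (fixed x); [apply src_idm|].
  destruct (positive x); [apply (proj1 (from_base_lift_spec x))|].
  rewrite fsrc, (proj1 (from_base_lift_spec _)); simpl; rewrite gcomm_ob, gs_invol_ob; reflexivity.
Qed.

Lemma diag_arrow_gs (x : inf_ob) : diag_arrow (inf_sob x) = fmor (gs X) (diag_arrow x).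
Proof.
  unfold diag_arrow; rewrite fixed_inf_sob; destruct (fixed x) eqn:Hx.
  - rewrite fidm; simpl; rewrite gcomm_ob; reflexivity.
  - rewrite (positive_inf_sob Hx); destruct (positive x); simpl.
    + rewrite inf_sob_invol; reflexivity.
    + rewrite gs_invol_mor; reflexivity.
Qed.

Lemma diag_arrow_incl_ob (e : Ob E) : diag_arrow (incl_ob e) = idm (fob u e).
Proof. unfold diag_arrow, fixed; simpl; rewrite is_idm_idm; reflexivity. Qed.

Lemma from_base_gs (x : inf_ob) : inf_smor (from_base (inf_sob x)) = from_base x.
Proof.
  apply inf_mor_ext; simpl; rewrite ?inf_sob_invol, ?fidm, ?gs_invol_ob; try reflexivity.
  rewrite <- incl_ob_gs, gs_invol_ob; reflexivity.
Qed.

Lemma diag_arrow_p (x : inf_ob) : fmor p (diag_arrow x) = fmor v (from_base x).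
Proof.
  unfold diag_arrow; destruct (fixed x) eqn:Hx.
  - pose proof (fixed_incl_ob Hx) as Hxi.
    assert (Hk : from_base x = inf_idm x) by (apply inf_mor_ext; simpl; congruence).
    rewrite fidm, Hk; change (inf_idm x) with (@idm inf_gpd x); rewrite fidm.
    rewrite Hxi at 2; f_equal; apply (proj1 square).
  - destruct (positive x); [apply (proj2 (from_base_lift_spec x))|].
    rewrite gcomm_mor, (proj2 (from_base_lift_spec _)), <- (from_base_gs x).
    symmetry; apply (gcomm_mor v).
Qed.

Definition diag : GMor Einf X :=
  conj_gmor (F := gm_comp u proj) (rho := diag_arrow) diag_arrow_src diag_arrow_gs.

Lemma diag_incl : gm_eq (gm_comp diag incl) u.
Proof.
  split.
  - intro e; simpl; rewrite diag_arrow_incl_ob; apply tgt_idm.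
  - intro m; apply (conj_fmor_id (F := gm_comp u proj)); apply diag_arrow_incl_ob.
Qed.

Lemma diag_p : gm_eq (gm_comp p diag) v.
Proof.
  split.
  - intro x; simpl; rewrite <- ftgt, diag_arrow_p, ftgt; reflexivity.
  - intro g.
    change (fmor p (fmor (conj_functor (F := gm_comp u proj) (rho := diag_arrow) diag_arrow_src) g)
            = fmor v g).
    assert (Hsq : fmor p (fmor (gm_comp u proj) g) = fmor v (incl_mor (arr g)))
      by exact (proj2 square (arr g)).
    rewrite fmor_conj, !diag_arrow_p, Hsq; symmetry; apply (fmor_inf_decomp v).
Qed.

End Lifting.

Lemma incl_cof : proj_cof incl.
Proof.
  intros X Y p [p_fib _] u v square.
  exists (diag p_fib square); split; [apply diag_incl | apply diag_p].
Qed.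

End Replacement.

Theorem proposition4p29 (E B : GpdG) (f : GMor E B) :
  exists (Einf : GpdG) (iinf : GMor E Einf) (finf : GMor Einf B),
    gm_eq f (gm_comp finf iinf) /\
    proj_triv_cof iinf /\
    proj_fib finf /\
    has_split_cleavage finf.
Proof.
  exists (Einf f), (incl f), (finf f).
  split; [apply finf_incl|].
  split; [split; [apply incl_cof | apply incl_weq]|].
  split; [apply finf_fib | exists (cleavage (f := f)); apply finf_split].
Qed.
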